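(* Let $p\ge1$ and let $x_0,x_1,\dots,x_p,y_1,\dots,y_p\in\mathbb{C}$ be pairwise distinct and all different from $1$. For $n,k\in\{0,1,\dots,p\}$ define $$B_{n,k}=\prod_{i=1}^{p}\frac{1-x_i}{1-y_i}+\sum_{j=1}^{p}\frac{(1-x_n)(1-x_k)(x_0-y_j)(y_j-x_j)}{(1-y_j)(1-x_0)(y_j-x_n)(y_j-x_k)}\prod_{\substack{i=1\\ i\ne j}}^{p}\frac{x_i-y_j}{y_i-y_j}.$$ Then $$B_{n,k}=\delta_{n,k}\,\frac{(x_k-1)\prod_{i=0,\,i\ne k}^{p}(x_k-x_i)}{(x_0-1)\prod_{i=1}^{p}(x_k-y_i)},$$ where $\delta_{n,k}$ is the Kronecker delta. *)

From mathcomp Require Import all_boot all_order all_algebra.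
From mathcomp Require Export complex.
From mathcomp Require Import reals.
Set Implicit Arguments. Unset Strict Implicit. Unset Printing Implicit Defensive.
Import Order.TTheory GRing.Theory Num.Theory.
Local Open Scope ring_scope.

(* x, y : nat -> R[i]; the relevant values are x 0 .. x p and y 1 .. y p. *)

Definition Bnk (R : realType) (p : nat) (x y : nat -> R[i]) (n k : nat) : R[i] :=
  \prod_(1 <= i < p.+1) ((1 - x i) / (1 - y i))
  + \sum_(1 <= j < p.+1)
      ((1 - x n) * (1 - x k) * (x 0%N - y j) * (y j - x j)
        / ((1 - y j) * (1 - x 0%N) * (y j - x n) * (y j - x k))
       * \prod_(1 <= i < p.+1 | i != j) ((x i - y j) / (y i - y j))).

From mathcomp Require Import all_boot all_order all_algebra.
From mathcomp Require Import complex reals ring.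
Set Implicit Arguments. Unset Strict Implicit. Unset Printing Implicit Defensive.
Import Order.TTheory GRing.Theory Num.Theory.
Local Open Scope ring_scope.

(* Up to the factor (1 - x_n)(1 - x_k)/(1 - x_0), B_{n,k} is the sum of the
   residues at 1 and at the y_j of the rational function
     f(z) = prod_{i=0}^p (z - x_i) / ((z - x_n) (z - x_k) (z - 1) prod_j (z - y_j)).
   As f = O(1/z^2) at infinity, the sum of all its residues vanishes; in the
   partial fraction form used here this is the vanishing of the top divided
   difference of a polynomial of too small degree (lagrange_sum_eq0).  When
   n <> k the numerator kills the poles x_n and x_k, so the residues at 1 and
   the y_j already sum to 0; when n = k the remaining simple pole at x_k
   contributes the right-hand side. *)

Lemma big_neq_notin (R : Type) (idx : R) (op : Monoid.law idx)
    (T : eqType) (s : seq T) (c : T) (F : T -> R) :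
  c \notin s -> \big[op/idx]_(b <- s | b != c) F b = \big[op/idx]_(b <- s) F b.
Proof.
move=> cs; rewrite big_seq_cond [RHS]big_seq; apply: eq_bigl => b.
by case: (boolP (b \in s)) => //= bs; apply: contraNneq cs => <-.
Qed.

Lemma lagrange_sum_eq0 (F : fieldType) (s : seq F) (q : {poly F}) :
  uniq s -> (size q < size s)%N ->
  \sum_(a <- s) q.[a] / \prod_(b <- s | b != a) (a - b) = 0.
Proof.
move=> us sq; have s_gt0 : (0 < size s)%N by apply: leq_ltn_trans sq.
pose P a := \prod_(b <- s | b != a) ('X - b%:P).
have sizeP a : a \in s -> size (P a) = size s.
  move=> sa; rewrite /P -big_filter size_prod_XsubC -rem_filter // size_rem //.
  by rewrite prednK.
have P_sample a c : a \in s -> c \in s ->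
    (P a).[c] = if a == c then \prod_(b <- s | b != a) (a - b) else 0.
  move=> sa sc; rewrite /P horner_prod; have [<-|ac] := eqVneq a c.
    by apply: eq_bigr => b _; rewrite hornerXsubC.
  apply/eqP; rewrite prodf_seq_eq0; apply/hasP; exists c => //.
  by rewrite hornerXsubC subrr eqxx eq_sym ac.
pose L := \sum_(a <- s) (q.[a] / \prod_(b <- s | b != a) (a - b)) *: P a.
have L_sample c : c \in s -> L.[c] = q.[c].
  move=> sc; rewrite /L horner_sum (bigD1_seq c) //= [X in _ + X]big1_seq ?addr0.
    rewrite hornerZ P_sample // eqxx divfK // prodf_seq_neq0.
    by apply/allP => b _; apply/implyP; rewrite subr_eq0 eq_sym.
  by move=> a /andP[ac sa]; rewrite hornerZ P_sample // (negbTE ac) mulr0.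
have sizeL : (size L <= size s)%N.
  apply: leq_trans (size_sum _ _ _) _; apply/bigmax_leqP_seq => a sa _.
  by apply: leq_trans (size_scale_leq _ _) _; rewrite sizeP.
(* q is its own Lagrange interpolant on s; the sum is the coefficient of
   X^(size s - 1) of that interpolant. *)
have q_eq_L : q = L.
  apply/eqP; rewrite -subr_eq0; apply/eqP.
  apply: (roots_geq_poly_eq0 (rs := s)) => //.
    by apply/allP => c sc; rewrite /root hornerD hornerN L_sample // subrr.
  by apply: leq_trans (size_polyD _ _) _; rewrite size_polyN geq_max sizeL ltnW.
have := congr1 (fun r : {poly F} => r`_(size s).-1) q_eq_L.
rewrite nth_default; last by rewrite -ltnS prednK.
rewrite /L coef_sum => /esym top_coef_eq0; apply: etrans top_coef_eq0.
rewrite !big_seq; apply: eq_bigr => a sa.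
rewrite coefZ -(sizeP a sa) -lead_coefE.
by rewrite /P lead_coef_prod_XsubC mulr1.
Qed.

Section ResidueSum.

Variables (R : realType) (p : nat) (x y : nat -> R[i]).
Hypothesis x_neq1 : forall i, (i <= p)%N -> x i != 1.
Hypothesis y_neq1 : forall j, (1 <= j <= p)%N -> y j != 1.
Hypothesis y_inj : forall i j, (1 <= i <= p)%N -> (1 <= j <= p)%N -> i <> j -> y i != y j.
Hypothesis x_neq_y : forall i j, (i <= p)%N -> (1 <= j <= p)%N -> x i != y j.

Local Notation ys := [seq y j | j <- index_iota 1 p.+1].
Local Notation nodes := (1%R :: ys).

Lemma eq_y i j : (1 <= i <= p)%N -> (1 <= j <= p)%N -> (y i == y j) = (i == j).
Proof.
move=> hi hj; apply/eqP/eqP => [yij|-> //].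
by case: (eqVneq i j) => // /eqP ij; move: (y_inj hi hj ij); rewrite yij eqxx.
Qed.

Lemma uniq_nodes : uniq nodes.
Proof.
rewrite /= map_inj_in_uniq ?iota_uniq ?andbT; last first.
  by move=> i j; rewrite !mem_index_iota => hi hj /eqP; rewrite eq_y // => /eqP.
apply/mapP => -[j]; rewrite mem_index_iota => hj /esym/eqP.
by rewrite (negbTE (y_neq1 hj)).
Qed.

Lemma x_notin_nodes i : (i <= p)%N -> x i \notin nodes.
Proof.
move=> hi; rewrite inE negb_or x_neq1 //=.
apply/mapP => -[j]; rewrite mem_index_iota => hj /eqP.
by rewrite (negbTE (x_neq_y hi hj)).
Qed.

Lemma prod_ys_neq j (G : R[i] -> R[i]) : (1 <= j <= p)%N ->
  \prod_(b <- ys | b != y j) G b = \prod_(1 <= i < p.+1 | i != j) G (y i).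
Proof.
move=> hj; rewrite big_map big_seq_cond [RHS]big_seq_cond; apply: eq_bigl => i.
by case: (boolP (i \in _)) => //; rewrite mem_index_iota => hi; rewrite eq_y.
Qed.

Definition xpoly : {poly R[i]} := \prod_(0 <= i < p.+1) ('X - (x i)%:P).
Definition xpoly_but k : {poly R[i]} := \prod_(0 <= i < p.+1 | i != k) ('X - (x i)%:P).

Lemma horner_xpoly_but k a : (xpoly_but k).[a] = \prod_(0 <= i < p.+1 | i != k) (a - x i).
Proof. by rewrite horner_prod; apply: eq_bigr => i _; rewrite hornerXsubC. Qed.

Lemma horner_xpoly_split k a : (k <= p)%N -> xpoly.[a] = (a - x k) * (xpoly_but k).[a].
Proof.
move=> hk; rewrite /xpoly (bigD1_seq k) ?iota_uniq ?mem_index_iota //=.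
by rewrite hornerM hornerXsubC.
Qed.

Lemma horner_xpoly a : xpoly.[a] = (a - x 0%N) * \prod_(1 <= i < p.+1) (a - x i).
Proof.
rewrite /xpoly horner_prod big_ltn // hornerXsubC; congr (_ * _).
by apply: eq_bigr => i _; rewrite hornerXsubC.
Qed.

Definition residue_sum n k := \sum_(a <- nodes)
  xpoly.[a] / ((a - x n) * (a - x k) * \prod_(b <- nodes | b != a) (a - b)).

Lemma residue_sum_offdiag n k : (n <= p)%N -> (k <= p)%N -> x n != x k ->
  residue_sum n k = 0.
Proof.
move=> hn hk xnk.
have nodes_uniq : uniq [:: x n, x k & nodes].
  rewrite cons_uniq inE negb_or xnk x_notin_nodes // cons_uniq.
  by rewrite x_notin_nodes // uniq_nodes.
have size_xpoly : (size xpoly < size [:: x n, x k & nodes])%N.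
  by rewrite /xpoly size_prod_XsubC /= size_map /index_iota !size_iota subn1.
have := lagrange_sum_eq0 nodes_uniq size_xpoly.
rewrite big_cons (horner_xpoly_split (x n) hn) subrr !mul0r add0r.
rewrite big_cons (horner_xpoly_split (x k) hk) subrr !mul0r add0r.
move=> <-; apply: eq_big_seq => a a_nodes.
have /negbTE xna : a != x n by apply: contraNneq (x_notin_nodes hn) => <-.
have /negbTE xka : a != x k by apply: contraNneq (x_notin_nodes hk) => <-.
by rewrite !big_cons !(eq_sym _ a) xna xka !mulrA.
Qed.

Lemma residue_sum_diag k : (k <= p)%N ->
  residue_sum k k = - (xpoly_but k).[x k] / ((x k - 1) * \prod_(1 <= i < p.+1) (x k - y i)).
Proof.
move=> hk.
have nodes_uniq : uniq [:: x k & nodes] by rewrite cons_uniq x_notin_nodes // uniq_nodes.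
have size_xpoly_but : (size (xpoly_but k) < size [:: x k & nodes])%N.
  rewrite /xpoly_but -big_filter size_prod_XsubC -rem_filter ?iota_uniq //.
  by rewrite size_rem ?mem_index_iota //= size_map /index_iota !size_iota subn1.
have := lagrange_sum_eq0 nodes_uniq size_xpoly_but.
rewrite big_cons big_cons eqxx /= big_neq_notin ?x_notin_nodes //.
rewrite [X in _ / X]big_cons big_map.
move=> /eqP; rewrite addrC addr_eq0 => /eqP sum_nodes.
rewrite /residue_sum mulNr -sum_nodes; apply: eq_big_seq => a a_nodes.
have xka : a != x k by apply: contraNneq (x_notin_nodes hk) => <-.
rewrite [in RHS]big_cons eq_sym xka (horner_xpoly_split a hk).
by rewrite -[(a - x k) * (a - x k) * _]mulrA -mulf_div divff ?mul1r // subr_eq0.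
Qed.

Lemma Bnk_residue_sum n k : (n <= p)%N -> (k <= p)%N ->
  Bnk p x y n k = (1 - x n) * (1 - x k) / (1 - x 0%N) * residue_sum n k.
Proof.
move=> hn hk.
have nz_1x i : (i <= p)%N -> 1 - x i != 0 by move=> hi; rewrite subr_eq0 eq_sym x_neq1.
have nz_yx i j : (i <= p)%N -> (1 <= j <= p)%N -> y j - x i != 0.
  by move=> hi hj; rewrite subr_eq0 eq_sym x_neq_y.
have /andP[one_notin_ys _] := uniq_nodes.
rewrite /Bnk /residue_sum big_cons big_map [RHS]mulrDr mulr_sumr; congr (_ + _).
  rewrite [in RHS]big_cons eqxx /= big_neq_notin // big_map horner_xpoly prodf_div.
  have nz_1y : \prod_(1 <= i < p.+1) (1 - y i) != 0.
    rewrite prodf_seq_neq0; apply/allP => i; rewrite mem_index_iota => hi.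
    by rewrite subr_eq0 eq_sym y_neq1.
  by field; rewrite nz_1y !nz_1x.
rewrite !big_seq; apply: eq_bigr => j; rewrite mem_index_iota => hj.
have one_neq_yj : 1 != y j by rewrite eq_sym y_neq1.
rewrite [in RHS]big_cons one_neq_yj prod_ys_neq //.
rewrite horner_xpoly (bigD1_seq j) ?iota_uniq ?mem_index_iota //=.
have -> : \prod_(1 <= i < p.+1 | i != j) ((x i - y j) / (y i - y j)) =
    \prod_(1 <= i < p.+1 | i != j) (y j - x i) / \prod_(1 <= i < p.+1 | i != j) (y j - y i).
  by rewrite -prodf_div; apply: eq_bigr => i _; rewrite -mulrNN -invrN !opprB.
have nz_yy : \prod_(1 <= i < p.+1 | i != j) (y j - y i) != 0.
  rewrite prodf_seq_neq0; apply/allP => i; rewrite mem_index_iota => hi.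
  by apply/implyP => ij; rewrite subr_eq0 eq_y // eq_sym.
have nz_1y : 1 - y j != 0 by rewrite subr_eq0.
have nz_y1 : y j - 1 != 0 by rewrite subr_eq0 eq_sym.
by field; rewrite nz_yy nz_1y nz_y1 !nz_yx // nz_1x.
Qed.

End ResidueSum.

Theorem lemma4 (R : realType) (p : nat) (x y : nat -> R[i])
  (hp : (1 <= p)%N)
  (hx1 : forall i, (i <= p)%N -> x i != 1)
  (hy1 : forall i, (1 <= i <= p)%N -> y i != 1)
  (hxx : forall i j, (i <= p)%N -> (j <= p)%N -> i <> j -> x i != x j)
  (hyy : forall i j, (1 <= i <= p)%N -> (1 <= j <= p)%N -> i <> j -> y i != y j)
  (hxy : forall i j, (i <= p)%N -> (1 <= j <= p)%N -> x i != y j)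
  (n k : nat) (hn : (n <= p)%N) (hk : (k <= p)%N) :
  Bnk p x y n k =
    (n == k)%:R * ((x k - 1) * \prod_(0 <= i < p.+1 | i != k) (x k - x i)
                   / ((x 0%N - 1) * \prod_(1 <= i < p.+1) (x k - y i))).
Proof.
rewrite (Bnk_residue_sum hx1 hy1 hyy hxy hn hk).
have [<- | n_neq_k] := eqVneq n k; last first.
  have x_neq : x n != x k by apply: hxx => //; apply/eqP.
  by rewrite (residue_sum_offdiag hx1 hy1 hyy hxy hn hk x_neq) mulr0 mul0r.
rewrite (residue_sum_diag hx1 hy1 hyy hxy hn) horner_xpoly_but mul1r.
have nz_x1 i : (i <= p)%N -> x i - 1 != 0 by move=> hi; rewrite subr_eq0 hx1.
have nz_xy : \prod_(1 <= i < p.+1) (x n - y i) != 0.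
  rewrite prodf_seq_neq0; apply/allP => i; rewrite mem_index_iota => hi.
  by rewrite subr_eq0 hxy.
by field; rewrite nz_xy !nz_x1 // subr_eq0 eq_sym hx1.
Qed.
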